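(* Let $\ell^{\infty}$ be the space of bounded real sequences $x=(x_i)_{i\in\mathbb{N}}$, and for $p\in(0,\infty)$, $n\in\mathbb{N}$ let $$\|x\|_{\infty,p,n}:=\sup_{j\in\mathbb{N}}\Big(\frac{1}{n}\sum_{i=j}^{j+(n-1)}|x_i|^{p}\Big)^{1/p}.$$ Let $p\in[1,\infty)$ and $n,m\in\mathbb{N}$ with $n<m$. Then for all $x\in\ell^{\infty}$, $$\|x\|_{\infty,p,m}^{p}\leq \frac{(\lfloor m/n\rfloor+1)\,n}{m}\,\|x\|_{\infty,p,n}^{p}\leq 2\,\|x\|_{\infty,p,n}^{p}.$$
   Context: $\mathbb{N}=\{1,2,3,\dots\}$; $\lfloor\cdot\rfloor$ denotes the floor function. *)

From mathcomp Require Import all_boot all_order all_algebra.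
From mathcomp Require Import all_classical all_reals all_analysis.
Set Implicit Arguments. Unset Strict Implicit. Unset Printing Implicit Defensive.
Import Order.TTheory GRing.Theory Num.Theory.
Local Open Scope classical_set_scope.
Local Open Scope ring_scope.

(* A real sequence (x_i)_{i in N}, N = {1,2,...}, is represented by
   x : nat -> R with x k standing for x_{k+1}. *)
Definition bounded_seq (R : realType) (x : nat -> R) : Prop :=
  exists M : R, forall i : nat, `|x i| <= M.

Definition norm_inf_p_n (R : realType) (p : R) (n : nat) (x : nat -> R) : R :=
  sup [set ((n%:R)^-1 * \sum_(j <= i < j + n) (`|x i| `^ p)) `^ (p^-1)
      | j in [set: nat]].

(* Cut a window of length m into (m %/ n).+1 consecutive blocks of length n,
   overshooting the window (the summands |x_i|^p are nonnegative).  Each block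
   sums to at most n ||x||_{oo,p,n}^p, so a window of length m sums to at most
   (m %/ n).+1 n ||x||_{oo,p,n}^p; dividing by m gives the first inequality.
   The second one is (m %/ n).+1 n <= m + n <= 2 m. *)
From mathcomp Require Import all_boot all_order all_algebra.
From mathcomp Require Import all_classical all_reals all_analysis.
Set Implicit Arguments. Unset Strict Implicit. Unset Printing Implicit Defensive.
Import Order.TTheory GRing.Theory Num.Theory.
Local Open Scope classical_set_scope.
Local Open Scope ring_scope.

Section PowRInverse.
Variables (R : realType) (p : R).
Hypothesis p_gt0 : 0 < p.

Lemma powRVK (a : R) : 0 <= a -> (a `^ p^-1) `^ p = a.
Proof. by move=> a_ge0; rewrite -powRrM mulVf ?gt_eqF // powRr1. Qed.

Lemma powRKV (a : R) : 0 <= a -> (a `^ p) `^ p^-1 = a.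
Proof. by move=> a_ge0; rewrite -powRrM mulfV ?gt_eqF // powRr1. Qed.

Lemma powRV_le (a b : R) : 0 <= a -> 0 <= b ->
  (a `^ p^-1 <= b) = (a <= b `^ p).
Proof.
move=> a_ge0 b_ge0; have p_ge0 := ltW p_gt0.
have pV_ge0 : 0 <= p^-1 by rewrite invr_ge0.
apply/idP/idP => le_ab.
- rewrite -(powRVK a_ge0).
  by apply: ge0_ler_powR => //; rewrite nnegrE ?powR_ge0.
- rewrite -(powRKV b_ge0).
  by apply: ge0_ler_powR => //; rewrite nnegrE ?powR_ge0.
Qed.

End PowRInverse.

Lemma sum_window_blocks (R : realType) (f : nat -> R) (n : nat) (c : R) :
  (forall j, \sum_(j <= i < j + n) f i <= n%:R * c) ->
  forall k j, \sum_(j <= i < j + k * n) f i <= (k * n)%:R * c.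
Proof.
move=> block_le; elim=> [|k IHk] j; first by rewrite addn0 big_geq // mul0r.
rewrite mulSnr addnA (big_cat_nat (leq_addr _ _) (leq_addr _ _)) /=.
by rewrite natrD mulrDl lerD.
Qed.

Lemma ge0_sum_window_le (R : realType) (f : nat -> R) (j k l : nat) :
  (forall i, 0 <= f i) -> (k <= l)%N ->
  \sum_(j <= i < j + k) f i <= \sum_(j <= i < j + l) f i.
Proof.
move=> f_ge0 le_kl; have le_jk_jl : (j + k <= j + l)%N by rewrite leq_add2l.
by rewrite (big_cat_nat (leq_addr k j) le_jk_jl) /= lerDl sumr_ge0.
Qed.

Definition window_mean (R : realType) (p : R) (k : nat) (x : nat -> R)
    (j : nat) : R :=
  (k%:R)^-1 * \sum_(j <= i < j + k) `|x i| `^ p.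

Section WindowNorm.
Variables (R : realType) (p : R) (x : nat -> R).
Hypotheses (p_gt0 : 0 < p) (x_bounded : bounded_seq x).

Lemma window_mean_ge0 (k j : nat) : 0 <= window_mean p k x j.
Proof. by rewrite mulr_ge0 ?invr_ge0 // sumr_ge0 // => *; apply: powR_ge0. Qed.

Lemma window_mean_le (M : R) (k j : nat) : 0 <= M ->
  (forall i, `|x i| <= M) -> window_mean p k x j <= M `^ p.
Proof.
move=> M_ge0 le_xM; have Mp_ge0 : 0 <= M `^ p := powR_ge0 _ _.
case: k => [|k]; first by rewrite /window_mean invr0 mul0r.
rewrite /window_mean ler_pdivrMl ?ltr0n //.
apply: le_trans (_ : \sum_(j <= i < j + k.+1) M `^ p <= _).
  apply: ler_sum => i _; apply: ge0_ler_powR; rewrite ?nnegrE //; exact: ltW.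
by rewrite sumr_const_nat addKn mulr_natl.
Qed.

Let windows k := [set window_mean p k x j `^ p^-1 | j in [set: nat]].

Lemma has_ubound_windows (k : nat) : has_ubound (windows k).
Proof.
have [M le_xM] := x_bounded.
have M_ge0 : 0 <= M := le_trans (normr_ge0 _) (le_xM 0%N).
exists M => _ [j _ <-]; rewrite powRV_le ?window_mean_ge0 //.
exact: window_mean_le.
Qed.

Lemma window_mean_le_norm (k j : nat) :
  window_mean p k x j <= norm_inf_p_n p k x `^ p.
Proof.
have le_sup : window_mean p k x j `^ p^-1 <= norm_inf_p_n p k x.
  by apply: (ub_le_sup (has_ubound_windows k)); exists j.
by rewrite -powRV_le ?window_mean_ge0 // (le_trans (powR_ge0 _ _) le_sup).
Qed.

Lemma norm_inf_p_n_powR_le (k : nat) (c : R) : 0 <= c ->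
  (forall j, window_mean p k x j <= c) -> norm_inf_p_n p k x `^ p <= c.
Proof.
move=> c_ge0 window_le.
have norm_le : norm_inf_p_n p k x <= c `^ p^-1.
  apply: ge_sup; first by exists (window_mean p k x 0 `^ p^-1), 0%N.
  move=> _ [j _ <-].
  by rewrite powRV_le ?window_mean_ge0 ?powR_ge0 // powRVK // window_le.
have norm_ge0 : 0 <= norm_inf_p_n p k x.
  apply: le_trans (powR_ge0 (window_mean p k x 0) p^-1) _.
  by apply: (ub_le_sup (has_ubound_windows k)); exists 0%N.
rewrite -(powRVK p_gt0 c_ge0).
by apply: ge0_ler_powR; rewrite ?nnegrE ?powR_ge0 //; apply: ltW.
Qed.

End WindowNorm.

Theorem lemma1p4 (R : realType) (p : R) (n m : nat) (x : nat -> R) :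
  1 <= p -> (0 < n)%N -> (n < m)%N -> bounded_seq x ->
  norm_inf_p_n p m x `^ p
    <= (((m %/ n).+1 * n)%:R / m%:R) * norm_inf_p_n p n x `^ p
  /\ (((m %/ n).+1 * n)%:R / m%:R) * norm_inf_p_n p n x `^ p
    <= 2 * norm_inf_p_n p n x `^ p.
Proof.
move=> p_ge1 n_gt0 lt_nm x_bounded.
have p_gt0 : 0 < p := lt_le_trans ltr01 p_ge1.
have m_gt0 : (0 < m)%N := ltn_trans n_gt0 lt_nm.
set s := norm_inf_p_n p n x `^ p; have s_ge0 : 0 <= s := powR_ge0 _ _.
have block_le j : \sum_(j <= i < j + n) `|x i| `^ p <= n%:R * s.
  by rewrite -ler_pdivrMl ?ltr0n //; exact: window_mean_le_norm.
split.
  apply: norm_inf_p_n_powR_le => // [|j]; first by rewrite mulr_ge0 ?divr_ge0.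
  rewrite /window_mean ler_pdivrMl ?ltr0n // mulrA [m%:R * _]mulrC.
  rewrite divfK ?pnatr_eq0 ?gtn_eqF //.
  apply: le_trans (sum_window_blocks block_le _ j).
  by apply: ge0_sum_window_le => [i|]; [exact: powR_ge0 | exact/ltnW/ltn_ceil].
rewrite ler_wpM2r // ler_pdivrMr ?ltr0n // -natrM ler_nat mulSn mul2n -addnn.
by rewrite leq_add ?leq_trunc_div // ltnW.
Qed.
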